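(* Let $R:\mathbb R^d\to(0,\infty)$ satisfy $|R(x)-R(y)|\le|x-y|$ for all $x,y$, and let $\rho(x,y)=\inf_\gamma\int_\gamma \frac{|dz|}{R(z)}$, the infimum over all piecewise $C^1$ curves $\gamma$ in $\mathbb R^d$ joining $x$ and $y$. Then for all $x,y\in\mathbb R^d$, \[ |x-y|\le 2^{3\rho(x,y)}R(x). \] *)

From Stdlib Require Import Reals.
From Coquelicot Require Import Coquelicot.
From mathcomp Require Import ssreflect ssrfun ssrbool eqtype ssrnat fintype bigop.

Local Open Scope R_scope.

Definition vec (d : nat) := 'I_d -> R.

Definition enorm {d : nat} (x : vec d) : R :=
  sqrt (\big[Rplus/0]_(i < d) (x i ^ 2)).

Definition vsub {d : nat} (x y : vec d) : vec d := fun i => x i - y i.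

Definition C1 {d : nat} (g : R -> vec d) : Prop :=
  forall i : 'I_d,
    (forall t, ex_derive (fun s => g s i) t) /\
    (forall t, continuous (Derive (fun s => g s i)) t).

Definition speed {d : nat} (g : R -> vec d) (t : R) : R :=
  sqrt (\big[Rplus/0]_(i < d) (Derive (fun s => g s i) t ^ 2)).

(* [pw_cost Rf x y c] : c = \int_gamma |dz| / Rf(z) for some piecewise C^1
   curve gamma joining x to y.  The curve is parametrised on [t 0, t n],
   with t 0 < t 1 < ... < t n, and on [t k, t (k+1)] it coincides with
   the C^1 function g k; consecutive pieces match at the break points. *)
Definition pw_cost {d : nat} (Rf : vec d -> R) (x y : vec d) (c : R) : Prop :=
  exists (n : nat) (t : nat -> R) (g : nat -> R -> vec d),
    (0 < n)%nat /\
    (forall k, (k < n)%nat -> t k < t (S k)) /\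
    (forall k, (k < n)%nat -> C1 (g k)) /\
    (forall i, g 0%nat (t 0%nat) i = x i) /\
    (forall i, g (n - 1)%nat (t n) i = y i) /\
    (forall k i, (S k < n)%nat -> g k (t (S k)) i = g (S k) (t (S k)) i) /\
    c = \big[Rplus/0]_(k < n)
          RInt (fun s => speed (g k) s / Rf (g k s)) (t k) (t (S k)).

Definition rho {d : nat} (Rf : vec d -> R) (x y : vec d) : R :=
  real (Glb_Rbar (pw_cost Rf x y)).

(* Along a piecewise C^1 curve starting at x, the arclength L travelled so far bounds
   |z - x| for the current point z, hence R(z) <= R(x) + L because R is 1-Lipschitz.
   So the cost of the curve dominates int dL / (R(x) + L) = ln (1 + L_total / R(x)),
   and L_total >= |y - x|.  Taking the infimum, 1 + |x - y| / R(x) <= e^rho <= 2^(3 rho). *)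

From HB Require Import structures.
From Pilot Require Import Defs.
From Stdlib Require Import Reals Lra Psatz FunctionalExtensionality.
From Coquelicot Require Import Coquelicot.
From mathcomp Require Import ssreflect ssrfun ssrbool eqtype ssrnat seq fintype bigop.

Local Open Scope R_scope.

Lemma RplusA : associative Rplus. Proof. by move=> a b c; ring. Qed.
Lemma RplusC : commutative Rplus. Proof. by move=> a b; ring. Qed.
Lemma Rplus0 : left_id 0 Rplus. Proof. by move=> a; ring. Qed.
HB.instance Definition _ := Monoid.isComLaw.Build R 0 Rplus RplusA RplusC Rplus0.

Lemma sumR_ge0 (I : Type) (r : seq I) (F : I -> R) :
  (forall i, 0 <= F i) -> 0 <= \big[Rplus/0]_(i <- r) F i.
Proof. by move=> F_ge0; apply: big_ind => // [|u v]; [lra | have := F_ge0; lra]. Qed.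

Lemma Cauchy_Schwarz_sumR (I : Type) (r : seq I) (a b : I -> R) :
  \big[Rplus/0]_(i <- r) (a i * b i) <=
  sqrt (\big[Rplus/0]_(i <- r) (a i ^ 2)) * sqrt (\big[Rplus/0]_(i <- r) (b i ^ 2)).
Proof.
have expand l : \big[Rplus/0]_(i <- r) ((l * a i - b i) ^ 2) =
    l ^ 2 * \big[Rplus/0]_(i <- r) (a i ^ 2) - 2 * l * \big[Rplus/0]_(i <- r) (a i * b i)
    + \big[Rplus/0]_(i <- r) (b i ^ 2).
  by elim: r => [|i r IHr]; rewrite ?big_nil ?big_cons ?IHr; ring.
set A := \big[Rplus/0]_(i <- r) (a i ^ 2) in expand *.
set S := \big[Rplus/0]_(i <- r) (a i * b i) in expand *.
set B := \big[Rplus/0]_(i <- r) (b i ^ 2) in expand *.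
have discr l : 0 <= l ^ 2 * A - 2 * l * S + B.
  by rewrite -expand; apply: sumR_ge0 => i; apply: pow2_ge_0.
have A_ge0 : 0 <= A by apply: sumR_ge0 => i; apply: pow2_ge_0.
have B_ge0 : 0 <= B by apply: sumR_ge0 => i; apply: pow2_ge_0.
have [sA sB] := (sqrt_sqrt A A_ge0, sqrt_sqrt B B_ge0).
have [sA0 sB0] := (sqrt_pos A, sqrt_pos B).
have [S_le0|S_gt0] := Rle_lt_dec S 0; first nra.
have [A_gt0|A0] := Rle_lt_or_eq_dec _ _ A_ge0.
- have lA : S / A * A = S by field; lra.
  have key : S ^ 2 <= A * B.
    have := discr (S / A); rewrite -{2}lA; nra.
  apply: Rsqr_incr_0_var; last exact: Rmult_le_pos.
  rewrite /Rsqr; nra.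
- have := discr ((B + 1) / (2 * S)); rewrite -A0.
  have -> : ((B + 1) / (2 * S)) ^ 2 * 0 - 2 * ((B + 1) / (2 * S)) * S + B = -1 by field; lra.
  lra.
Qed.

Lemma continuous_sumR (I : Type) (r : seq I) (F : I -> R -> R) (t : R) :
  (forall i, continuous (F i) t) -> continuous (fun s => \big[Rplus/0]_(i <- r) F i s) t.
Proof.
move=> F_cont; elim: r => [|i r IHr].
  by apply: (continuous_ext (fun=> 0)) => [s|]; [rewrite big_nil | exact: continuous_const].
apply: (continuous_ext (fun s => plus (F i s) (\big[Rplus/0]_(j <- r) F j s))).
  by move=> s; rewrite big_cons.
exact: continuous_plus.
Qed.

Lemma is_derive_sumR (I : Type) (r : seq I) (F : I -> R -> R) (dF : I -> R) (t : R) :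
  (forall i, is_derive (F i) t (dF i)) ->
  is_derive (fun s => \big[Rplus/0]_(i <- r) F i s) t (\big[Rplus/0]_(i <- r) dF i).
Proof.
move=> F_dF; elim: r => [|i r IHr].
  rewrite big_nil; apply: (is_derive_ext (fun=> 0)) => [s|]; first by rewrite big_nil.
  exact: is_derive_const.
rewrite big_cons; apply: (is_derive_ext (fun s => plus (F i s) (\big[Rplus/0]_(j <- r) F j s))).
  by move=> s; rewrite big_cons.
exact: is_derive_plus.
Qed.

Lemma continuous_sqr (f : R -> R) (t : R) :
  continuous f t -> continuous (fun s => f s ^ 2) t.
Proof.
move=> f_cont; apply: (continuous_ext (fun s => mult (f s) (f s))).
  by move=> s; rewrite /mult /=; ring.
exact: continuous_mult.
Qed.

Lemma is_derive_RInt_continuous (f : R -> R) (a t : R) :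
  (forall s, continuous f s) -> is_derive (fun u => RInt f a u) t (f t).
Proof.
move=> f_cont; apply: is_derive_RInt => //.
by apply: filter_forall => u; apply/RInt_correct/ex_RInt_continuous => s _.
Qed.

Lemma derive_ge0_le (f df : R -> R) (a b : R) : a <= b ->
  (forall x, a <= x <= b -> is_derive f x (df x)) ->
  (forall x, a <= x <= b -> 0 <= df x) -> f a <= f b.
Proof.
move=> ab f_df df_ge0.
have [c [c_ab fab]] : exists c, a <= c <= b /\ f b - f a = df c * (b - a).
  have := MVT_gen f a b df; rewrite /= Rmin_left ?Rmax_right //; apply => x x_ab.
  - apply: f_df; lra.
  - apply/continuity_pt_filterlim/ex_derive_continuous.
    by exists (df x); exact: f_df.
have := df_ge0 c c_ab; nra.
Qed.

Lemma exp_le_Rpower_2_3 {b r : R} : 0 <= b -> b <= r -> exp b <= Rpower 2 (3 * r).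
Proof.
move=> b_ge0 br; rewrite /Rpower; have ln2_gt := ln_lt_2.
have : b <= 3 * r * ln 2 by nra.
case/Rle_lt_or_eq_dec => [/exp_increasing|<-]; lra.
Qed.

Lemma le_real_Glb_Rbar (E : R -> Prop) (b : R) :
  (forall c, E c -> b <= c) -> (exists c, E c) -> b <= real (Glb_Rbar E).
Proof.
move=> lbE [c Ec]; have [glb_lb glb_greatest] := Glb_Rbar_correct E.
have := glb_greatest (Rbar.Finite b) lbE; have := glb_lb c Ec.
by case: (Glb_Rbar E).
Qed.

Definition dot {d : nat} (u v : vec d) : R := \big[Rplus/0]_(i < d) (u i * v i).

Lemma enorm_ge0 {d : nat} (v : vec d) : 0 <= enorm v.
Proof. exact: sqrt_pos. Qed.

Lemma dot_le_enorm {d : nat} (u v : vec d) : dot u v <= enorm u * enorm v.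
Proof. exact: Cauchy_Schwarz_sumR. Qed.

Lemma dot_self {d : nat} (v : vec d) : dot v v = enorm v ^ 2.
Proof.
rewrite /enorm pow2_sqrt; last by apply: sumR_ge0 => i; apply: pow2_ge_0.
by apply: eq_bigr => i _; ring.
Qed.

Lemma enorm_vsubxx {d : nat} (x : vec d) : enorm (vsub x x) = 0.
Proof. by rewrite /enorm big1 ?sqrt_0 // => i _; rewrite /vsub; ring. Qed.

Lemma enorm_vsubC {d : nat} (x y : vec d) : enorm (vsub x y) = enorm (vsub y x).
Proof. by rewrite /enorm; congr sqrt; apply: eq_bigr => i _; rewrite /vsub; ring. Qed.

Lemma enorm_vsub_triangle {d : nat} (x y z : vec d) :
  enorm (vsub x z) <= enorm (vsub x y) + enorm (vsub y z).
Proof.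
set u := vsub x y; set w := vsub y z.
have expand : dot (vsub x z) (vsub x z) = dot u u + dot u w + dot u w + dot w w.
  by rewrite /dot -!big_split; apply: eq_bigr => i _ /=; rewrite /u /w /vsub; ring.
rewrite !dot_self in expand; have := dot_le_enorm u w.
have := enorm_ge0 u; have := enorm_ge0 w.
move=> w_ge0 u_ge0 uw; apply: Rsqr_incr_0_var; rewrite /Rsqr; nra.
Qed.

Definition arclength {d : nat} (g : R -> vec d) (a b : R) : R := RInt (speed g) a b.

Section Curves.

Context {d : nat} {g : R -> vec d} (g_C1 : Defs.C1 g).

Lemma continuous_coord (i : 'I_d) (t : R) : continuous (fun s => g s i) t.
Proof. exact/ex_derive_continuous/(g_C1 i).1. Qed.

Lemma continuous_speed (t : R) : continuous (speed g) t.
Proof.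
apply/continuous_sqrt_comp/continuous_sumR => i.
exact/continuous_sqr/(g_C1 i).2.
Qed.

Lemma is_derive_arclength (a t : R) : is_derive (arclength g a) t (speed g t).
Proof. exact/is_derive_RInt_continuous/continuous_speed. Qed.

Lemma arclength_ge0 {a b : R} : a <= b -> 0 <= arclength g a b.
Proof.
move=> ab; apply: RInt_ge_0 => // [|s _]; last exact: sqrt_pos.
by apply: ex_RInt_continuous => s _; apply: continuous_speed.
Qed.

Lemma dot_increment_le (v : vec d) {a b : R} : a <= b ->
  dot v (vsub (g b) (g a)) <= enorm v * arclength g a b.
Proof.
move=> ab; pose velocity u : vec d := fun i => Derive (fun s => g s i) u.
have start : enorm v * arclength g a a - dot v (vsub (g a) (g a)) = 0.
  rewrite /arclength RInt_point /dot big1 /zero /= => [|i _]; first ring.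
  by rewrite /vsub; ring.
suff : enorm v * arclength g a a - dot v (vsub (g a) (g a)) <=
       enorm v * arclength g a b - dot v (vsub (g b) (g a)) by lra.
apply: (derive_ge0_le (fun u => enorm v * arclength g a u - dot v (vsub (g u) (g a)))
  (fun u => enorm v * speed g u - dot v (velocity u))) => // u _.
- apply: is_derive_minus; first exact/is_derive_scal/is_derive_arclength.
  apply: is_derive_sumR => i; rewrite /vsub /velocity.
  have := is_derive_minus _ _ u _ _ (Derive_correct _ _ ((g_C1 i).1 u)) (is_derive_const (g a i) u).
  rewrite /minus /plus /opp /zero /= Ropp_0 Rplus_0_r.
  exact: is_derive_scal.
- have speedE : enorm (velocity u) = speed g u by [].
  by rewrite -speedE; have := dot_le_enorm v (velocity u); lra.
Qed.

Lemma enorm_increment_le {a b : R} : a <= b -> enorm (vsub (g b) (g a)) <= arclength g a b.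
Proof.
move=> ab; have := dot_increment_le (vsub (g b) (g a)) ab.
rewrite dot_self; have := enorm_ge0 (vsub (g b) (g a)); have := arclength_ge0 ab; nra.
Qed.

End Curves.

Definition piece_cost {d : nat} (Rf : vec d -> R) (g : R -> vec d) (a b : R) : R :=
  RInt (fun s => speed g s / Rf (g s)) a b.

Section LipschitzWeight.

Variables (d : nat) (Rf : vec d -> R).
Hypothesis Rf_pos : forall x, 0 < Rf x.
Hypothesis Rf_lip : forall x y, Rabs (Rf x - Rf y) <= enorm (vsub x y).

Lemma Rf_le_add_enorm (x y : vec d) : Rf y <= Rf x + enorm (vsub y x).
Proof. by have := Rf_lip y x; have := Rle_abs (Rf y - Rf x); lra. Qed.

Lemma continuous_Rf_comp (g : R -> vec d) (t : R) :
  Defs.C1 g -> continuous (fun s => Rf (g s)) t.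
Proof.
move=> g_C1.
have dist_cont : continuous (fun s => enorm (vsub (g s) (g t))) t.
  apply/continuous_sqrt_comp/continuous_sumR => i; apply: continuous_sqr.
  by apply: continuous_minus; [exact: continuous_coord | exact: continuous_const].
apply/filterlim_locally => eps.
move: dist_cont => /filterlim_locally /(_ eps); apply: filter_imp => s.
rewrite /ball /= /AbsRing_ball /abs /minus /plus /opp /= enorm_vsubxx.
have := Rf_lip (g s) (g t); have := enorm_ge0 (vsub (g s) (g t)).
by move=> dist_ge0 Rf_dist; rewrite Ropp_0 Rplus_0_r Rabs_pos_eq // -/(Rminus _ _); lra.
Qed.

Lemma ln_arclength_le_piece_cost {g : R -> vec d} {a b : R} (C : R) :
  Defs.C1 g -> a <= b -> 0 < C -> Rf (g a) <= C ->
  ln (C + arclength g a b) - ln C <= piece_cost Rf g a b.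
Proof.
move=> g_C1 ab C_gt0 Rga_le.
have weight_cont s : continuous (fun u => speed g u / Rf (g u)) s.
  apply: continuous_mult; first exact: continuous_speed.
  apply: continuous_Rinv_comp; first exact: continuous_Rf_comp.
  by have := Rf_pos (g s); lra.
have start : piece_cost Rf g a a - ln (C + arclength g a a) = - ln C.
  by rewrite /piece_cost /arclength !RInt_point /zero /= Rplus_0_r; ring.
suff : piece_cost Rf g a a - ln (C + arclength g a a) <=
       piece_cost Rf g a b - ln (C + arclength g a b) by lra.
apply: (derive_ge0_le (fun u => piece_cost Rf g a u - ln (C + arclength g a u))
  (fun u => speed g u / Rf (g u) - speed g u / (C + arclength g a u))) => // u [au _].
- have ell_ge0 := arclength_ge0 g_C1 au.
  apply: is_derive_minus; first exact: is_derive_RInt_continuous.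
  have := is_derive_plus _ _ u _ _ (is_derive_const C u) (is_derive_arclength g_C1 a u).
  rewrite /plus /zero /= Rplus_0_l => dCl.
  have Cl_gt0 : 0 < C + arclength g a u by lra.
  exact: (is_derive_comp ln _ u _ _ (is_derive_ln _ Cl_gt0) dCl).
- have Rgu_le : Rf (g u) <= C + arclength g a u.
    have := Rf_le_add_enorm (g a) (g u); have := enorm_increment_le g_C1 au; lra.
  have speed_ge0 : 0 <= speed g u := sqrt_pos _.
  have /(Rmult_le_compat_l _ _ _ speed_ge0) : / (C + arclength g a u) <= / Rf (g u).
    by apply: Rinv_le_contravar => //; apply: Rf_pos.
  rewrite /Rdiv; lra.
Qed.

Lemma ln_enorm_le_pw_cost (x y : vec d) (c : R) :
  pw_cost Rf x y c -> ln (Rf x + enorm (vsub y x)) - ln (Rf x) <= c.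
Proof.
case=> n [t [g [n_gt0 [t_incr [g_C1 [g_x [g_y [g_glue ->]]]]]]]].
pose L m := \big[Rplus/0]_(k < m) arclength (g k) (t k) (t k.+1).
pose cost m := \big[Rplus/0]_(k < m) piece_cost Rf (g k) (t k) (t k.+1).
pose z m := if m is m'.+1 then g m' (t m) else x.
have z_start m : (m < n)%nat -> g m (t m) = z m.
  case: m => [|m] m_lt; apply: functional_extensionality => i; first exact: g_x.
  by rewrite /= g_glue.
have z_end : z n = y.
  apply: functional_extensionality => i; rewrite -g_y subn1.
  by rewrite -{1}(prednK n_gt0) /= prednK.
have Rx_gt0 := Rf_pos x.
have chain m : (m <= n)%nat ->
    enorm (vsub (z m) x) <= L m /\ ln (Rf x + L m) - ln (Rf x) <= cost m.
  elim: m => [|m IHm] m_lt.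
    by rewrite /L /cost /= !big_ord0 enorm_vsubxx Rplus_0_r; lra.
  have [z_le cost_le] := IHm (ltnW m_lt).
  have tm_le : t m <= t m.+1 by apply/Rlt_le/t_incr.
  have gm_C1 := g_C1 m m_lt.
  rewrite /L /cost !big_ord_recr /= -/(L m) -/(cost m) -(z_start m m_lt) in z_le *.
  have L_ge0 : 0 <= L m by have := enorm_ge0 (vsub (g m (t m)) x); lra.
  split.
  - have := enorm_vsub_triangle (g m (t m.+1)) (g m (t m)) x.
    have := enorm_increment_le gm_C1 tm_le; lra.
  - have := ln_arclength_le_piece_cost (Rf x + L m) gm_C1 tm_le.
    have := Rf_le_add_enorm x (g m (t m)); rewrite Rplus_assoc; lra.
have [y_le cost_ge] := chain n (leqnn n).
rewrite z_end in y_le.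
have := ln_le (Rf x + enorm (vsub y x)) (Rf x + L n).
have := enorm_ge0 (vsub y x); rewrite -/(cost n); lra.
Qed.

End LipschitzWeight.

Lemma pw_cost_segment {d : nat} (Rf : vec d -> R) (x y : vec d) : exists c, pw_cost Rf x y c.
Proof.
eexists; exists 1%nat, INR, (fun _ s i => x i + s * (y i - x i)).
split=> //; split=> [k _|]; first by rewrite S_INR; lra.
split=> [k _ i|].
  split=> s; first by auto_derive.
  have -> : Derive (fun u => x i + u * (y i - x i)) = fun _ => y i - x i.
    by apply: functional_extensionality => u; apply: is_derive_unique; auto_derive; [|ring].
  exact: continuous_const.
split=> [i|]; first by rewrite /=; ring.
split=> [i|]; first by rewrite /=; ring.
by split.
Qed.

Theorem lemma1p5 (d : nat) (Rf : vec d -> R)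
  (Rpos : forall x, 0 < Rf x)
  (Rlip : forall x y, Rabs (Rf x - Rf y) <= enorm (vsub x y)) :
  forall x y : vec d,
    enorm (vsub x y) <= Rpower 2 (3 * rho Rf x y) * Rf x.
Proof.
move=> x y; rewrite enorm_vsubC.
have [Rx_gt0 w_ge0] := (Rpos x, enorm_ge0 (vsub y x)).
set w := enorm (vsub y x) in w_ge0 *; set B := ln (Rf x + w) - ln (Rf x).
have B_ge0 : 0 <= B.
  have : Rf x <= Rf x + w by lra.
  by move/(ln_le _ _ Rx_gt0); rewrite /B; lra.
have B_le_rho : B <= rho Rf x y.
  apply: le_real_Glb_Rbar; last exact: pw_cost_segment.
  exact: ln_enorm_le_pw_cost.
have expB : exp B * Rf x = Rf x + w.
  rewrite -{1}(exp_ln (Rf x)) // -exp_plus /B.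
  have -> : ln (Rf x + w) - ln (Rf x) + ln (Rf x) = ln (Rf x + w) by ring.
  by rewrite exp_ln //; lra.
have := Rmult_le_compat_r _ _ _ (Rlt_le _ _ Rx_gt0) (exp_le_Rpower_2_3 B_ge0 B_le_rho).
lra.
Qed.
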